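(* Let $\mathcal H$ be a complex Hilbert space, $U\in\mathcal B(\mathcal H)$ unitary, and $\mathcal K\subset\mathcal H$ a closed subspace with orthogonal projection $P_{\mathcal K}$. Put $S=(I-P_{\mathcal K})U$, let $\Theta_S$ be the characteristic function of $S$ (viewed as a map $U^*(\mathcal K)\to\mathcal K$, see context), and let $\tilde U:U^*(\mathcal K)\to\mathcal K$ be the restriction of $U$ to $U^*(\mathcal K)$. Then for every $z$ in the open unit disc $\mathbb D$ and every $k\in\mathcal K$, $$\big\langle (U+zI)(U-zI)^{-1}k,\,k\big\rangle=\big\langle (\tilde U+\Theta_S(z))(\tilde U-\Theta_S(z))^{-1}k,\,k\big\rangle .$$
   Context: For a contraction $T$ on a Hilbert space, $D_T=(I-T^*T)^{1/2}$, $D_{T^*}=(I-TT^* )^{1/2}$, $\mathcal D_T=\overline{D_T\mathcal H}$, $\mathcal D_{T^*}=\overline{D_{T^*}\mathcal H}$, and the characteristic function is $\Theta_T(z)=\big(-T+zD_{T^*}(I-zT^* )^{-1}D_T\big)|_{\mathcal D_T}:\mathcal D_T\to\mathcal D_{T^*}$, $z\in\mathbb D$. For $S=(I-P_{\mathcal K})U$ one has $\mathcal D_S=U^*(\mathcal K)$ and $\mathcal D_{S^*}=\mathcal K$, so $\Theta_S(z):U^*(\mathcal K)\to\mathcal K$, and $\Theta_S(0)=0$. The operator $(\tilde U+\Theta_S(z))(\tilde U-\Theta_S(z))^{-1}$ acts on $\mathcal K$. *)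

From HB Require Import structures.
From mathcomp Require Import all_boot all_order all_algebra.
From mathcomp Require Import complex reals.
From Stdlib Require Import ClassicalEpsilon.
Set Implicit Arguments. Unset Strict Implicit. Unset Printing Implicit Defensive.
Import Order.TTheory GRing.Theory Num.Theory.
Local Open Scope ring_scope.

Section Hilbert.
Variables (R : realType) (H : lmodType R[i]) (ip : H -> H -> R[i]).

Definition hnorm (x : H) : R := Num.sqrt (complex.Re (ip x x)).

Definition cauchy_seq (u : nat -> H) : Prop :=
  forall e : R, 0 < e -> exists N : nat, forall m n : nat,
    (N <= m)%N -> (N <= n)%N -> hnorm (u m - u n) < e.

Definition seq_converges_to (u : nat -> H) (l : H) : Prop :=
  forall e : R, 0 < e -> exists N : nat, forall n : nat,
    (N <= n)%N -> hnorm (u n - l) < e.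

Definition is_hilbert : Prop :=
  [/\ (forall (a : R[i]) (x y w : H), ip (a *: x + y) w = a * ip x w + ip y w),
      (forall x y : H, ip y x = conjc (ip x y)),
      (forall x : H, 0 <= ip x x),
      (forall x : H, ip x x = 0 -> x = 0) &
      (forall u : nat -> H, cauchy_seq u -> exists l, seq_converges_to u l)].

Definition linear_op (T : H -> H) : Prop :=
  forall (a : R[i]) (x y : H), T (a *: x + y) = a *: T x + T y.

Definition bounded_op (T : H -> H) : Prop :=
  linear_op T /\ exists M : R, forall x : H, hnorm (T x) <= M * hnorm x.

Definition adj (T : H -> H) : H -> H :=
  epsilon (inhabits (fun x : H => x))
    (fun A : H -> H => forall x y : H, ip (T x) y = ip x (A y)).

Definition unitary (U : H -> H) : Prop :=
  [/\ bounded_op U, (forall x, adj U (U x) = x) & (forall x, U (adj U x) = x)].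

Definition closed_subspace (K : H -> Prop) : Prop :=
  [/\ K 0, (forall (a : R[i]) x y, K x -> K y -> K (a *: x + y)) &
      (forall (u : nat -> H) (l : H), (forall n, K (u n)) ->
          seq_converges_to u l -> K l)].

Definition orth_proj (K : H -> Prop) (x : H) : H :=
  epsilon (inhabits 0)
    (fun k : H => K k /\ forall w : H, K w -> ip (x - k) w = 0).

Definition positive_op (B : H -> H) : Prop :=
  bounded_op B /\ forall x : H, 0 <= ip (B x) x.

Definition op_sqrt (A : H -> H) : H -> H :=
  epsilon (inhabits (fun x : H => x))
    (fun B : H -> H => positive_op B /\ forall x, B (B x) = A x).

Definition op_inv (A : H -> H) (y : H) : H :=
  epsilon (inhabits 0) (fun x : H => A x = y).

Definition op_inv_on (D : H -> Prop) (A : H -> H) (y : H) : H :=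
  epsilon (inhabits 0) (fun x : H => D x /\ A x = y).

Definition defect (T : H -> H) : H -> H :=
  op_sqrt (fun x => x - adj T (T x)).
Definition defect_adj (T : H -> H) : H -> H :=
  op_sqrt (fun x => x - T (adj T x)).

(* characteristic function Theta_T(z) = -T + z D_{T^ *} (I - z T^ * )^{-1} D_T,
   as a map on H (to be restricted to \mathcal D_T) *)
Definition char_fun (T : H -> H) (z : R[i]) (x : H) : H :=
  - T x + z *: defect_adj T (op_inv (fun y => y - z *: adj T y) (defect T x)).

End Hilbert.

From HB Require Import structures.
From mathcomp Require Import all_boot all_order all_algebra.
From mathcomp Require Import complex reals ring lra.
From mathcomp Require classical_sets.
From Stdlib Require Import Classical ClassicalEpsilon FunctionalExtensionality.
Import Order.TTheory GRing.Theory Num.Theory.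
Set Implicit Arguments. Unset Strict Implicit. Unset Printing Implicit Defensive.
Local Open Scope ring_scope.

(** With [V := U^*] one finds [S^* = V (I - P)], hence [I - S^* S = V P U] and
  [I - S S^* = P]: both are orthogonal projections, so they are their own
  positive square roots and [D_S = V P U], [D_{S^*} = P].  Consequently, on
  [V(K)] the characteristic function is [Theta_S(z) y = z P w], where [w] solves
  [w - z V (I - P) w = y].  If [x] solves [U x - z x = k], then
  [y := x - z V (I - P) x] lies in [V(K)], is solved by [w = x], and
  [U y - Theta_S(z) y = k]; conversely every solution [y] in [V(K)] has [w = x].
  Hence [U y + Theta_S(z) y = k + 2 z P x] while [U x + z x = k + 2 z x], and
  both sides of the identity equal [<k, k> + 2 z <x, k>].

  Since the definitions select these objects by choice, each must be shown to
  exist: orthogonal projections (distance minimisers, by completeness), adjoints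
  (Riesz representation), square roots (unique for projections) and solutions
  of [w - z T w = y] for contractions [T] and [|z| < 1]. *)

Section Hilbert.
Variables (R : realType) (H : lmodType R[i]) (ip : H -> H -> R[i]).
Hypothesis hH : is_hilbert ip.

Local Notation hn := (hnorm ip).

(** * Inner products and norms *)

Lemma ip_linear a x y w : ip (a *: x + y) w = a * ip x w + ip y w.
Proof. by case: hH => h *; apply: h. Qed.
Lemma ip_conj x y : ip y x = conjc (ip x y).
Proof. by case: hH => _ h *; apply: h. Qed.
Lemma ip_ge0 x : 0 <= ip x x.
Proof. by case: hH => _ _ h *; apply: h. Qed.
Lemma ip_eq0 x : ip x x = 0 -> x = 0.
Proof. by case: hH => _ _ _ h *; apply: h. Qed.
Lemma cauchy_converges u : cauchy_seq ip u -> exists l, seq_converges_to ip u l.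
Proof. by case: hH => _ _ _ _ h; apply: h. Qed.

Lemma ip0l w : ip 0 w = 0.
Proof.
have := ip_linear 1 0 0 w; rewrite scale1r addr0 mul1r => h.
by apply: (addrI (ip 0 w)); rewrite addr0 -h.
Qed.
Lemma ipDl x y w : ip (x + y) w = ip x w + ip y w.
Proof. by have := ip_linear 1 x y w; rewrite scale1r mul1r. Qed.
Lemma ipZl a x w : ip (a *: x) w = a * ip x w.
Proof. by have := ip_linear a x 0 w; rewrite addr0 ip0l addr0. Qed.
Lemma ipNl x w : ip (- x) w = - ip x w.
Proof. by rewrite -scaleN1r ipZl mulN1r. Qed.
Lemma ipBl x y w : ip (x - y) w = ip x w - ip y w.
Proof. by rewrite ipDl ipNl. Qed.
Lemma ip0r w : ip w 0 = 0.
Proof. by rewrite ip_conj ip0l conjc0. Qed.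
Lemma ipDr x y w : ip w (x + y) = ip w x + ip w y.
Proof. by rewrite ip_conj ipDl rmorphD /= -!ip_conj. Qed.
Lemma ipZr a x w : ip w (a *: x) = conjc a * ip w x.
Proof. by rewrite ip_conj ipZl rmorphM /= -ip_conj. Qed.
Lemma ipNr x w : ip w (- x) = - ip w x.
Proof. by rewrite ip_conj ipNl rmorphN /= -ip_conj. Qed.
Lemma ipBr x y w : ip w (x - y) = ip w x - ip w y.
Proof. by rewrite ipDr ipNr. Qed.
Lemma ipZr_real (t : R) x y : ip x (t%:C%C *: y) = t%:C%C * ip x y.
Proof. by rewrite ipZr conjc_real. Qed.

Lemma ip_inj_r a b : (forall x, ip x a = ip x b) -> a = b.
Proof.
move=> h; apply/eqP; rewrite -subr_eq0; apply/eqP; apply: ip_eq0.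
by rewrite ipBr h subrr.
Qed.

Lemma ReD (a b : R[i]) : complex.Re (a + b) = complex.Re a + complex.Re b.
Proof. by case: a; case: b. Qed.
Lemma ReN (a : R[i]) : complex.Re (- a) = - complex.Re a.
Proof. by case: a. Qed.
Lemma ReJ (a : R[i]) : complex.Re (conjc a) = complex.Re a.
Proof. by case: a. Qed.
Lemma Re_realM (t : R) (a : R[i]) : complex.Re (t%:C%C * a) = t * complex.Re a.
Proof. by case: a => ? ? /=; rewrite mul0r subr0. Qed.

Definition abs2 (a : R[i]) : R := complex.Re (a * conjc a).

Lemma mulcJ_abs2 a : a * conjc a = (abs2 a)%:C%C.
Proof. by case: a => p q; rewrite /abs2; simpc; rewrite /=; congr (_ +i* _)%C; ring. Qed.
Lemma abs2_ge0 a : 0 <= abs2 a.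
Proof. by case: a => p q; rewrite /abs2 /= mulrN opprK addr_ge0 // -expr2 sqr_ge0. Qed.
Lemma abs2_eq0 a : abs2 a = 0 -> a = 0.
Proof.
case: a => p q; rewrite /abs2; simpc; rewrite /= => /eqP.
by rewrite -!expr2 paddr_eq0 ?sqr_ge0 // !sqrf_eq0 => /andP[/eqP-> /eqP->].
Qed.
Lemma abs2_real (t : R) : abs2 (t%:C%C) = t ^+ 2.
Proof. by rewrite /abs2 conjc_real /= !mul0r subr0 expr2. Qed.
Lemma abs2N a : abs2 (- a) = abs2 a.
Proof. by rewrite /abs2 rmorphN mulrNN. Qed.
Lemma abs2_lt1 (z : R[i]) : `|z| < 1 -> abs2 z < 1.
Proof.
move=> hz; have : `|z| ^+ 2 < 1 by rewrite expr_lt1 // normr_ge0.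
by rewrite normCK mulcJ_abs2 ltcR.
Qed.

Definition sqnorm x : R := complex.Re (ip x x).

Lemma sqnorm_ge0 x : 0 <= sqnorm x.
Proof. by have := ip_ge0 x; rewrite lecE /= => /andP[]. Qed.
Lemma ip_sqnorm x : ip x x = (sqnorm x)%:C%C.
Proof.
have := ip_ge0 x; rewrite lecE /= => /andP[/eqP h _].
by rewrite /sqnorm; case: (ip x x) h => a b /= ->.
Qed.
Lemma sqnorm_eq0 x : sqnorm x = 0 -> x = 0.
Proof. by move=> h; apply: ip_eq0; rewrite ip_sqnorm h. Qed.
Lemma sqnorm0 : sqnorm 0 = 0.
Proof. by rewrite /sqnorm ip0l. Qed.
Lemma sqnormD x y : sqnorm (x + y) = sqnorm x + sqnorm y + 2 * complex.Re (ip x y).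
Proof. rewrite /sqnorm ipDl !ipDr !ReD (ip_conj x y) ReJ; lra. Qed.
Lemma sqnormZ a x : sqnorm (a *: x) = abs2 a * sqnorm x.
Proof. by rewrite /sqnorm ipZl ipZr mulrA mulcJ_abs2 ip_sqnorm /= !mul0r !subr0. Qed.
Lemma sqnormN x : sqnorm (- x) = sqnorm x.
Proof. by rewrite /sqnorm ipNl ipNr opprK. Qed.
Lemma parallelogram a b :
  sqnorm (a - b) + sqnorm (a + b) = 2%:R * sqnorm a + 2%:R * sqnorm b.
Proof. rewrite !sqnormD sqnormN ipNr ReN; lra. Qed.

Lemma Re_ip_sqr_le x y : complex.Re (ip x y) ^+ 2 <= sqnorm x * sqnorm y.
Proof.
have [y0|ny] := eqVneq (sqnorm y) 0.
  by rewrite y0 (sqnorm_eq0 y0) ip0r /= expr0n /= mulr0.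
have nyp : 0 < sqnorm y by rewrite lt_def ny sqnorm_ge0.
set r := complex.Re (ip x y); set t := - r / sqnorm y.
have := sqnorm_ge0 (x + t%:C%C *: y).
rewrite sqnormD sqnormZ abs2_real ipZr_real Re_realM -/r => h.
rewrite -subr_ge0.
have -> : sqnorm x * sqnorm y - r ^+ 2
    = sqnorm y * (sqnorm x + t ^+ 2 * sqnorm y + 2 * (t * r)).
  by rewrite /t; field; rewrite ny.
by apply: mulr_ge0 => //; apply: ltW.
Qed.

Lemma cauchy_schwarz x y : abs2 (ip x y) <= sqnorm x * sqnorm y.
Proof.
set c := ip x y.
have := Re_ip_sqr_le x (c *: y).
rewrite sqnormZ ipZr mulrC mulcJ_abs2 /= -/c => h.
have := abs2_ge0 c; rewrite le_eqVlt => /orP[/eqP <-|cp].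
  by rewrite mulr_ge0 // sqnorm_ge0.
by move: h; rewrite expr2 mulrCA ler_pM2l.
Qed.

Lemma hnormE x : hn x = Num.sqrt (sqnorm x). Proof. by []. Qed.
Lemma hnorm_ge0 x : 0 <= hn x. Proof. exact: sqrtr_ge0. Qed.
Lemma hnorm_sqr x : hn x ^+ 2 = sqnorm x.
Proof. by rewrite hnormE sqr_sqrtr // sqnorm_ge0. Qed.
Lemma hnorm0 : hn 0 = 0. Proof. by rewrite hnormE sqnorm0 sqrtr0. Qed.
Lemma hnorm_eq0 x : hn x = 0 -> x = 0.
Proof. by move=> h; apply: sqnorm_eq0; rewrite -hnorm_sqr h expr0n. Qed.
Lemma hnormN x : hn (- x) = hn x. Proof. by rewrite !hnormE sqnormN. Qed.
Lemma hnormB_sym x y : hn (x - y) = hn (y - x). Proof. by rewrite -hnormN opprB. Qed.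
Lemma hnormZ a x : hn (a *: x) = Num.sqrt (abs2 a) * hn x.
Proof. by rewrite !hnormE sqnormZ sqrtrM // abs2_ge0. Qed.
Lemma hnorm_le x y : sqnorm x <= sqnorm y -> hn x <= hn y.
Proof. by move=> h; rewrite !hnormE ler_sqrt ?sqnorm_ge0. Qed.
Lemma hnorm_lt x e : 0 < e -> (hn x < e) = (sqnorm x < e ^+ 2).
Proof.
move=> e0; have e2 : 0 < e ^+ 2 by rewrite exprn_gt0.
by rewrite hnormE -(ltr_sqrt _ e2) sqrtr_sqr ger0_norm // ltW.
Qed.

Lemma Re_ip_le x y : complex.Re (ip x y) <= hn x * hn y.
Proof.
have := Re_ip_sqr_le x y; rewrite -(hnorm_sqr x) -(hnorm_sqr y) => h.
have ab : 0 <= hn x * hn y by rewrite mulr_ge0 // hnorm_ge0.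
apply: le_trans (ler_norm _) _.
by rewrite -sqrtr_sqr -(ger0_norm ab) -sqrtr_sqr ler_sqrt ?sqr_ge0 // exprMn.
Qed.

Lemma hnormD x y : hn (x + y) <= hn x + hn y.
Proof.
have h : sqnorm (x + y) <= (hn x + hn y) ^+ 2.
  rewrite sqnormD -(hnorm_sqr x) -(hnorm_sqr y); have := Re_ip_le x y; nra.
rewrite hnormE -(@ger0_norm _ (hn x + hn y)); last by rewrite addr_ge0 // hnorm_ge0.
by rewrite -sqrtr_sqr ler_sqrt // sqr_ge0.
Qed.

Lemma hnorm_triangle x y w : hn (x - y) <= hn (x - w) + hn (w - y).
Proof. by apply: le_trans (hnormD _ _); rewrite addrA subrK. Qed.

Lemma ge0_lt_all_eq0 (a : R) : 0 <= a -> (forall e, 0 < e -> a < e) -> a = 0.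
Proof.
move=> a0 h; have [ap|] := ltP 0 a; last by move=> ?; apply/eqP; rewrite eq_le a0 andbT.
have := h (a / 2%:R) (divr_gt0 ap (ltr0Sn _ 1)); lra.
Qed.

Lemma invS_lt_eventually (c : R) :
  0 < c -> exists N : nat, forall n, (N <= n)%N -> (n.+1%:R)^-1 < c.
Proof.
move=> c0; exists (Num.truncn (c^-1)) => n hn.
have h1 := truncnS_gt (c^-1).
have h2 : (Num.truncn c^-1).+1%:R <= n.+1%:R :> R by rewrite ler_nat.
rewrite -[c]invrK ltf_pV2 ?posrE ?invr_gt0 //; lra.
Qed.

Section LinearOp.
Variable T : H -> H.
Hypothesis hT : linear_op T.

Lemma linear_opD x y : T (x + y) = T x + T y.
Proof. by have := hT 1 x y; rewrite !scale1r. Qed.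
Lemma linear_op0 : T 0 = 0.
Proof.
have := linear_opD 0 0; rewrite addr0 => h.
by apply: (addrI (T 0)); rewrite addr0 -h.
Qed.
Lemma linear_opZ a x : T (a *: x) = a *: T x.
Proof. by have := hT a x 0; rewrite !addr0 linear_op0 addr0. Qed.
Lemma linear_opB x y : T (x - y) = T x - T y.
Proof. by rewrite linear_opD -scaleN1r linear_opZ scaleN1r. Qed.
End LinearOp.

Lemma converges_uniq u a b :
  seq_converges_to ip u a -> seq_converges_to ip u b -> a = b.
Proof.
move=> ha hb; apply/eqP; rewrite -subr_eq0; apply/eqP; apply: hnorm_eq0.
apply: ge0_lt_all_eq0; first exact: hnorm_ge0.
move=> e e0; have e2 : 0 < e / 2%:R by rewrite divr_gt0.
have [N1 h1] := ha _ e2; have [N2 h2] := hb _ e2.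
have := h1 (maxn N1 N2) (leq_maxl _ _); have := h2 (maxn N1 N2) (leq_maxr _ _).
have := hnorm_triangle a b (u (maxn N1 N2)); rewrite (hnormB_sym a (u _)); lra.
Qed.

Lemma converges_cauchy u a : seq_converges_to ip u a -> cauchy_seq ip u.
Proof.
move=> ha e e0; have e2 : 0 < e / 2%:R by rewrite divr_gt0.
have [N h] := ha _ e2; exists N => m n hm hn'.
have := h m hm; have := h n hn'.
have := hnorm_triangle (u m) (u n) a; rewrite (hnormB_sym a (u _)); lra.
Qed.

Lemma converges_bounded_op T M u a : linear_op T -> (forall x, hn (T x) <= M * hn x) ->
  seq_converges_to ip u a -> seq_converges_to ip (fun n => T (u n)) (T a).
Proof.
move=> hT hM ha e e0.
have M1 : 0 < `|M| + 1 by rewrite ltr_wpDl.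
have [N h] := ha _ (divr_gt0 e0 M1); exists N => n hn'.
rewrite -linear_opB //; apply: le_lt_trans (hM _) _.
have := h n hn'; have := hnorm_ge0 (u n - a); rewrite ltr_pdivlMr // => p q.
have := ler_norm M; nra.
Qed.

(** * Orthogonal projections *)

Section Projection.
Variable K : H -> Prop.
Hypothesis hK : closed_subspace ip K.

Lemma subspace0 : K 0. Proof. by case: hK. Qed.
Lemma subspace_lin a x y : K x -> K y -> K (a *: x + y).
Proof. by case: hK => _ h _; apply: h. Qed.
Lemma subspace_closed u l : (forall n, K (u n)) -> seq_converges_to ip u l -> K l.
Proof. by case: hK => _ _ h; apply: h. Qed.
Lemma subspaceZ a x : K x -> K (a *: x).
Proof. by move=> kx; rewrite -[_ *: _]addr0; apply: subspace_lin => //; exact: subspace0. Qed.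
Lemma subspaceD x y : K x -> K y -> K (x + y).
Proof. by move=> *; rewrite -[x]scale1r; apply: subspace_lin. Qed.
Lemma subspaceB x y : K x -> K y -> K (x - y).
Proof. by move=> kx ky; apply: subspaceD => //; rewrite -scaleN1r; exact: subspaceZ. Qed.

Section MinimisingSequence.
Variables (x : H) (d : R) (kn : nat -> H).
Hypothesis d_le : forall k, K k -> d <= sqnorm (x - k).
Hypothesis kn_in : forall n, K (kn n).
Hypothesis kn_near : forall n, sqnorm (x - kn n) < d + (n.+1%:R)^-1.

(* The midpoint of [kn m] and [kn n] lies in [K], so the parallelogram law
   forces [kn m] and [kn n] to be close. *)
Lemma minimising_cauchy : cauchy_seq ip kn.
Proof.
move=> e e0.
have e4 : 0 < e ^+ 2 / 4%:R by rewrite divr_gt0 // exprn_gt0.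
have [N hN] := invS_lt_eventually e4.
exists N => m n hm hn'; rewrite hnorm_lt //.
have hmid : K ((2%:R : R[i])^-1 *: (kn m + kn n)) by apply/subspaceZ/subspaceD.
have := d_le hmid.
have := parallelogram (x - kn n) (x - kn m).
have -> : x - kn n - (x - kn m) = kn m - kn n by rewrite opprB addrC addrA subrK.
have -> : x - kn n + (x - kn m)
    = (2%:R : R[i]) *: (x - (2%:R : R[i])^-1 *: (kn m + kn n)).
  rewrite scalerBr scalerA mulfV ?pnatr_eq0 // scale1r scaler_nat mulr2n.
  by rewrite opprD addrACA (addrC (- kn n)).
rewrite sqnormZ.
have -> : abs2 2%:R = 4%:R.
  by rewrite -(rmorph_nat (real_complex R)) abs2_real expr2 -natrM.
have := hN m hm; have := hN n hn'; have := kn_near m; have := kn_near n.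
have := ltr0Sn R m; have := ltr0Sn R n.
set a := (m.+1%:R)^-1; set b := (n.+1%:R)^-1; set q := sqnorm (x - _).
move=> _ _ hkn hkm ha hb hpar hq.
have : sqnorm (kn m - kn n) <= 2%:R * a + 2%:R * b by lra.
move: ha hb; rewrite !ltr_pdivlMr //; lra.
Qed.

Lemma minimising_limit_le p : seq_converges_to ip kn p -> sqnorm (x - p) <= d.
Proof.
move=> hp; rewrite leNgt; apply/negP => hgt.
set g := hn (x - p).
have g0 : 0 <= g by apply: hnorm_ge0.
have hg2 : g ^+ 2 = sqnorm (x - p) by rewrite hnorm_sqr.
set eta := sqnorm (x - p) - d.
have eta0 : 0 < eta by rewrite /eta subr_gt0.
have [N1 hN1] := invS_lt_eventually (divr_gt0 eta0 (ltr0Sn R 3)).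
have g1 : 0 < eta / (4%:R * (g + 1)) by rewrite divr_gt0 // mulr_gt0 // ltr_wpDl.
have [N2 hN2] := hp _ g1.
set n := maxn N1 N2.
have h1 := hN1 n (leq_maxl _ _); have h2 := hN2 n (leq_maxr _ _).
have h3 := kn_near n.
have h4 : g <= hn (x - kn n) + hn (kn n - p) by apply: hnorm_triangle.
set dl := hn (kn n - p) in h2 h4.
set a := (n.+1%:R)^-1 in h1 h3.
have dl0 : 0 <= dl by apply: hnorm_ge0.
have hx : hn (x - kn n) ^+ 2 < d + a by rewrite hnorm_sqr.
have hx0 : 0 <= hn (x - kn n) by apply: hnorm_ge0.
set t := hn (x - kn n) in hx hx0 h4.
move: h1 h2; rewrite ltr_pdivlMr // ltr_pdivlMr; last by rewrite mulr_gt0 // ltr_wpDl.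
move=> h1 h2.
have h7 : g ^+ 2 - 2%:R * g * dl <= t ^+ 2 by case: (lerP dl g) => hh; nra.
have : eta < a + 2%:R * g * dl by rewrite /eta -hg2; nra.
nra.
Qed.

End MinimisingSequence.

(* Moving from [p] towards [p + lam c w] cannot decrease the distance to [x]:
   this yields [- |c|^2 / |w|^2 >= 0]. *)
Lemma minimiser_orth x p : K p -> (forall k, K k -> sqnorm (x - p) <= sqnorm (x - k)) ->
  forall w, K w -> ip (x - p) w = 0.
Proof.
move=> Kp pmin w kw.
have [w0|nw] := eqVneq (sqnorm w) 0; first by rewrite (sqnorm_eq0 w0) ip0r.
have nwp : 0 < sqnorm w by rewrite lt_def nw sqnorm_ge0.
set c := ip (x - p) w; set lam := (sqnorm w)^-1.
have := pmin _ (subspace_lin (lam%:C%C * c) kw Kp).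
have -> : x - ((lam%:C%C * c) *: w + p) = (x - p) + - (lam%:C%C *: (c *: w)).
  by rewrite scalerA opprD addrA addrAC.
rewrite (sqnormD (x - p)) sqnormN !sqnormZ abs2_real ipNr ReN ipZr_real Re_realM.
rewrite ipZr -/c (mulrC (conjc c)) mulcJ_abs2 /= => h.
have hc : abs2 c <= 0.
  have : lam ^+ 2 * (abs2 c * sqnorm w) - 2%:R * (lam * abs2 c) >= 0 by lra.
  have -> : lam ^+ 2 * (abs2 c * sqnorm w) - 2%:R * (lam * abs2 c)
      = - (abs2 c / sqnorm w) by rewrite /lam; field; rewrite nw.
  by rewrite oppr_ge0 pmulr_lle0 // invr_gt0.
by apply: abs2_eq0; apply/eqP; rewrite eq_le hc abs2_ge0.
Qed.

Lemma orth_proj_exists x : exists p, K p /\ forall w, K w -> ip (x - p) w = 0.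
Proof.
pose D : classical_sets.set R := fun r => exists k, K k /\ r = - sqnorm (x - k).
have Dub : classical_sets.ubound D 0.
  by move=> r [k [_ ->]]; rewrite oppr_le0 sqnorm_ge0.
have hD : classical_sets.has_sup D.
  by split; [exists (- sqnorm (x - 0)); exists 0; split => //; exact: subspace0 | exists 0].
set d := - sup D.
have d_le k : K k -> d <= sqnorm (x - k).
  move=> kk; have := sup_upper_bound hD (ex_intro _ k (conj kk (erefl (- sqnorm (x - k))))).
  rewrite /d; lra.
have near n : exists k, K k /\ sqnorm (x - k) < d + (n.+1%:R)^-1.
  have ep : 0 < (n.+1%:R : R)^-1 by rewrite invr_gt0.
  have [r [k [kk ->]] hr] := sup_adherent ep hD.
  exists k; split => //; move: hr; rewrite -subr_gt0 => hr.
  by rewrite /d -subr_gt0; move: hr; congr (0 < _); ring.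
pose kn n := epsilon (inhabits 0) (fun k => K k /\ sqnorm (x - k) < d + (n.+1%:R)^-1).
have hkn n : K (kn n) /\ sqnorm (x - kn n) < d + (n.+1%:R)^-1.
  exact: (epsilon_spec (inhabits 0) _ (near n)).
have kn_in n : K (kn n) by case: (hkn n).
have kn_near n : sqnorm (x - kn n) < d + (n.+1%:R)^-1 by case: (hkn n).
have [p hp] := cauchy_converges (minimising_cauchy d_le kn_in kn_near).
have Kp : K p := subspace_closed kn_in hp.
exists p; split => //; apply: minimiser_orth => // k kk.
exact: le_trans (minimising_limit_le kn_near hp) (d_le _ kk).
Qed.

Local Notation P := (orth_proj ip K).

Lemma orth_proj_spec x : K (P x) /\ forall w, K w -> ip (x - P x) w = 0.
Proof. exact: (epsilon_spec (inhabits 0) _ (orth_proj_exists x)). Qed.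
Lemma orth_proj_in x : K (P x). Proof. by case: (orth_proj_spec x). Qed.
Lemma orth_proj_orth x w : K w -> ip (x - P x) w = 0.
Proof. by case: (orth_proj_spec x) => _; apply. Qed.

Lemma orth_proj_unique x p : K p -> (forall w, K w -> ip (x - p) w = 0) -> P x = p.
Proof.
move=> kp hp; apply/eqP; rewrite -subr_eq0; apply/eqP; apply: ip_eq0.
have kq : K (P x - p) by apply: subspaceB => //; exact: orth_proj_in.
have -> : ip (P x - p) (P x - p) = ip (x - p) (P x - p) - ip (x - P x) (P x - p).
  by rewrite -ipBl opprB [_ + (P x - x)]addrC addrA subrK.
by rewrite hp // orth_proj_orth // subrr.
Qed.

Lemma orth_proj_id m : K m -> P m = m.
Proof. by move=> km; apply: orth_proj_unique => // w _; rewrite subrr ip0l. Qed.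
Lemma orth_proj_idem x : P (P x) = P x.
Proof. exact/orth_proj_id/orth_proj_in. Qed.

Lemma orth_proj_linear : linear_op P.
Proof.
move=> a x y; apply: orth_proj_unique; first by apply: subspace_lin; exact: orth_proj_in.
move=> w kw.
have -> : a *: x + y - (a *: P x + P y) = a *: (x - P x) + (y - P y).
  by rewrite scalerBr opprD addrACA.
by rewrite ip_linear !orth_proj_orth // mulr0 addr0.
Qed.

Lemma orth_proj_residual x : P (x - P x) = 0.
Proof.
by apply: orth_proj_unique; [exact: subspace0 | move=> w kw; rewrite subr0 orth_proj_orth].
Qed.

Lemma ip_orth_proj_residual x y : ip (P y) (x - P x) = 0.
Proof. by rewrite ip_conj orth_proj_orth ?conjc0 //; exact: orth_proj_in. Qed.

Lemma sqnorm_orth_proj x : sqnorm x = sqnorm (P x) + sqnorm (x - P x).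
Proof.
have := sqnormD (P x) (x - P x); rewrite addrC subrK => ->.
by rewrite ip_orth_proj_residual /= mulr0 addr0.
Qed.

Lemma hnorm_orth_proj_le x : hn (P x) <= hn x.
Proof. by apply: hnorm_le; rewrite (sqnorm_orth_proj x) lerDl sqnorm_ge0. Qed.

Lemma orth_proj_sym a b : ip (P a) b = ip a (P b).
Proof.
have -> : ip (P a) b = ip (P a) (P b) + ip (P a) (b - P b) by rewrite -ipDr addrC subrK.
have -> : ip a (P b) = ip (P a) (P b) + ip (a - P a) (P b) by rewrite -ipDl addrC subrK.
by rewrite ip_orth_proj_residual orth_proj_orth ?addr0 //; exact: orth_proj_in.
Qed.

Lemma orth_proj_ge0 b : 0 <= ip (P b) b.
Proof.
have -> : ip (P b) b = ip (P b) (P b) + ip (P b) (b - P b) by rewrite -ipDr addrC subrK.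
by rewrite ip_orth_proj_residual addr0 ip_ge0.
Qed.

End Projection.

(** * Adjoints *)

Section Adjoint.
Variables (T : H -> H) (hT : bounded_op ip T).

Lemma bounded_op_linear : linear_op T. Proof. by case: hT. Qed.

Lemma bounded_kernel_closed y : closed_subspace ip (fun x => ip (T x) y = 0).
Proof.
have [lT [M hM]] := hT.
split; first by rewrite linear_op0 // ip0l.
  by move=> a x w hx hw; rewrite lT ip_linear hx hw mulr0 addr0.
move=> u l hu hl.
have hc := converges_bounded_op lT hM hl.
apply: abs2_eq0; apply: ge0_lt_all_eq0; first exact: abs2_ge0.
move=> e e0.
have ny1 : 0 < sqnorm y + 1 by rewrite ltr_wpDl ?sqnorm_ge0.
set c := e / (sqnorm y + 1).
have c0 : 0 < c by rewrite divr_gt0.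
have [n0 hn0] : exists n0, forall n, (n0 <= n)%N -> hn (T (u n) - T l) < Num.sqrt c.
  by apply: hc; rewrite sqrtr_gt0.
have := hn0 n0 (leqnn _); rewrite hnorm_lt ?sqrtr_gt0 // sqr_sqrtr ?ltW // => h1.
have -> : ip (T l) y = - ip (T (u n0) - T l) y by rewrite ipBl hu sub0r opprK.
rewrite abs2N; apply: le_lt_trans (cauchy_schwarz _ y) _.
have : c * (sqnorm y + 1) = e by rewrite /c mulfVK // gt_eqF.
have := sqnorm_ge0 y; have := sqnorm_ge0 (T (u n0) - T l); nra.
Qed.

(* If [f := ip (T .) y] is not zero, [e] orthogonal to its kernel satisfies
   [f x *: e - f e *: x] in the kernel, whence [f x = ip x (conj (f e / <e,e>) e)]. *)
Lemma riesz_representation y : exists v, forall x, ip (T x) y = ip x v.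
Proof.
have lT := bounded_op_linear.
pose f x := ip (T x) y.
have fB x w : f (x - w) = f x - f w by rewrite /f linear_opB // ipBl.
pose N x := f x = 0.
have hN : closed_subspace ip N := bounded_kernel_closed y.
have [hall|] := classic (forall x, f x = 0).
  by exists 0 => x; rewrite ip0r; exact: hall.
move=> /not_all_ex_not [x1 hx1].
set e := x1 - orth_proj ip N x1.
have fe : f e = f x1 by rewrite /e fB (orth_proj_in hN x1) subr0.
have fe0 : f e != 0 by apply/eqP; rewrite fe.
have ee : ip e e != 0.
  by apply/eqP => /ip_eq0 e0; move: fe0; rewrite e0 /f linear_op0 // ip0l eqxx.
exists (conjc (f e / ip e e) *: e) => x.
have hz : N (f x *: e - f e *: x).
  by rewrite /N fB /f !linear_opZ // !ipZl mulrC subrr.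
have : ip (f x *: e - f e *: x) e = 0.
  by rewrite ip_conj (orth_proj_orth hN x1 hz) conjc0.
rewrite ipBl !ipZl => /eqP; rewrite subr_eq0 => /eqP h.
rewrite ipZr conjcK -/(f x).
by apply: (mulIf ee); rewrite h; field.
Qed.

Lemma adjE x y : ip (T x) y = ip x (adj ip T y).
Proof.
have [A hA] : exists A, forall x y, ip (T x) y = ip x (A y).
  exists (fun y => epsilon (inhabits 0) (fun v => forall x, ip (T x) y = ip x v)).
  by move=> x' y'; apply: (epsilon_spec (inhabits 0) _ (riesz_representation y')).
exact: (epsilon_spec (inhabits (fun x : H => x))
  (fun A => forall x y, ip (T x) y = ip x (A y)) (ex_intro _ A hA)).
Qed.

End Adjoint.

Lemma adj_unique T A : (forall x y, ip (T x) y = ip x (A y)) -> forall y, adj ip T y = A y.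
Proof.
move=> hA y; have := epsilon_spec (inhabits (fun x : H => x))
  (fun A => forall x y, ip (T x) y = ip x (A y)) (ex_intro _ A hA).
rewrite -/(adj ip T) => hadj.
by apply: ip_inj_r => x; rewrite -hA -hadj.
Qed.

(** * Resolvents of contractions and square roots of projections *)

Lemma op_inv_spec (f : H -> H) y :
  (exists x, f x = y) -> f (op_inv (R:=R) f y) = y.
Proof. exact: (epsilon_spec (inhabits 0) (fun x => f x = y)). Qed.

Lemma op_inv_on_spec (D : H -> Prop) (f : H -> H) y : (exists x, D x /\ f x = y) ->
  D (op_inv_on (R:=R) D f y) /\ f (op_inv_on (R:=R) D f y) = y.
Proof. exact: (epsilon_spec (inhabits 0) (fun x => D x /\ f x = y)). Qed.

Section Contraction.
Variables (T : H -> H) (z : R[i]).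
Hypothesis hT : linear_op T.
Hypothesis T_contr : forall x, sqnorm (T x) <= sqnorm x.
Hypothesis hz : abs2 z < 1.

Let sz := Num.sqrt (abs2 z).
Let res w := w - z *: T w.

Let sz_lt1 : sz < 1.
Proof. by rewrite /sz -sqrtr1 ltr_sqrt // ltr01. Qed.
Let sz_ge0 : 0 <= sz. Proof. exact: sqrtr_ge0. Qed.
Let hnorm_contr x : hn (T x) <= hn x. Proof. exact: hnorm_le. Qed.

Lemma resolvent_linear : linear_op res.
Proof.
move=> a x y; rewrite /res (hT a x y) scalerDr scalerA mulrC -scalerA.
by rewrite scalerBr opprD addrACA.
Qed.

Lemma resolvent_lower_bound w : (1 - sz) * hn w <= hn (res w).
Proof.
have h1 : hn w <= hn (res w) + hn (z *: T w) by apply: le_trans (hnormD _ _); rewrite subrK.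
have h2 := hnorm_contr w; rewrite hnormZ -/sz in h1.
have := sz_ge0; nra.
Qed.

Lemma resolvent_bounded x : hn (res x) <= (1 + sz) * hn x.
Proof.
apply: le_trans (hnormD _ _) _; rewrite hnormN hnormZ -/sz.
have := hnorm_contr x; have := sz_ge0; have := hnorm_ge0 (T x); nra.
Qed.

Lemma resolvent_injective : injective res.
Proof.
move=> a b hab; apply/eqP; rewrite -subr_eq0; apply/eqP; apply: hnorm_eq0.
have := resolvent_lower_bound (a - b); rewrite linear_opB ?hab ?subrr ?hnorm0 //.
  by have := sz_lt1; have := hnorm_ge0 (a - b); nra.
exact: resolvent_linear.
Qed.

(* Completeness and the lower bound make the range closed. *)
Lemma resolvent_range_closed : closed_subspace ip (fun b => exists w, res w = b).
Proof.
split.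
- by exists 0; rewrite /res linear_op0 // scaler0 subr0.
- by move=> a x y [w1 <-] [w2 <-]; exists (a *: w1 + w2); rewrite resolvent_linear.
move=> u l hu hl.
pose w n := epsilon (inhabits 0) (fun w => res w = u n).
have hw n : res (w n) = u n by apply: (epsilon_spec (inhabits 0) (fun w => res w = u n)).
have hc : cauchy_seq ip w.
  move=> e e0.
  have s0 : 0 < 1 - sz by rewrite subr_gt0 sz_lt1.
  have [N hN] := converges_cauchy hl (mulr_gt0 e0 s0).
  exists N => m n hm hn'.
  have := hN m n hm hn'; rewrite -!hw -linear_opB; last exact: resolvent_linear.
  have := resolvent_lower_bound (w m - w n); have := hnorm_ge0 (w m - w n); nra.
have [wl hwl] := cauchy_converges hc.
have := converges_bounded_op resolvent_linear resolvent_bounded hwl.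
have -> : (fun n => res (w n)) = u by apply: functional_extensionality.
by move=> hl'; exists wl; exact: converges_uniq hl' hl.
Qed.

(* A vector [e] orthogonal to the range satisfies [<e, e> = <e, z T e>], which
   is impossible for [e <> 0] as [|z T e| < |e|]. *)
Lemma resolvent_surj b : exists w, res w = b.
Proof.
have hRg := resolvent_range_closed.
pose e := b - orth_proj ip (fun b => exists w, res w = b) b.
have h0 : ip e (res e) = 0 by rewrite /e orth_proj_orth //; exists e.
have : sqnorm e <= sz * sqnorm e.
  move: h0; rewrite /res ipBr => /eqP; rewrite subr_eq0 => /eqP h0.
  have hre : sqnorm e = complex.Re (ip e (z *: T e)) by rewrite /sqnorm h0.
  rewrite {1}hre -(hnorm_sqr e).
  apply: le_trans (Re_ip_le _ _) _; rewrite hnormZ -/sz.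
  have := hnorm_contr e; have := mulr_ge0 sz_ge0 (hnorm_ge0 e); nra.
move=> h; have : sqnorm e = 0 by have := sz_lt1; have := sqnorm_ge0 e; nra.
move/sqnorm_eq0; rewrite /e => /eqP; rewrite subr_eq0 => /eqP ->.
exact: (orth_proj_in hRg).
Qed.

End Contraction.

Lemma positive_op_Re B x : positive_op ip B -> 0 <= complex.Re (ip (B x) x).
Proof. by case=> _ h; have := h x; rewrite lecE /= => /andP[]. Qed.

Section PositiveSquare.
Variable B : H -> H.
Hypothesis hB : positive_op ip B.

Let lB : linear_op B. Proof. by case: hB => [[]]. Qed.

(* [0 <= Re <B (u + t s), u + t s> = Re <s, u> + t |s|^2] for all real [t]
   when [s := B u] and [B s = 0]. *)
Lemma positive_sqr_eq0 u : B (B u) = 0 -> B u = 0.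
Proof.
set s := B u => hs.
have hpos (t : R) : 0 <= complex.Re (ip s u) + t * sqnorm s.
  have := positive_op_Re (u + t%:C%C *: s) hB.
  by rewrite (linear_opD lB) (linear_opZ lB) hs scaler0 addr0 -/s ipDr ipZr_real ReD Re_realM.
have [/sqnorm_eq0 //|ns0] := eqVneq (sqnorm s) 0.
exfalso.
have sp : 0 < sqnorm s by rewrite lt_def ns0 sqnorm_ge0.
have := hpos (- (`|complex.Re (ip s u)| + 1) / sqnorm s).
rewrite mulrAC -mulrA divff ?gt_eqF // mulr1.
have := ler_norm (complex.Re (ip s u)); lra.
Qed.

(* For [t := B v - v] one gets [B t = - t], so [0 <= Re <B t, t> = - |t|^2]. *)
Lemma positive_sqr_fixed v : B (B v) = v -> B v = v.
Proof.
move=> hv; set t := B v - v.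
have ht : B t + t = 0 by rewrite /t (linear_opB lB) hv addrA subrK subrr.
have : complex.Re (ip (B t + t) t) = 0 by rewrite ht ip0l.
rewrite ipDl ReD -/(sqnorm t) => h.
have := positive_op_Re t hB; have := sqnorm_ge0 t => h1 h2.
have /sqnorm_eq0 : sqnorm t = 0 by lra.
by rewrite /t => /eqP; rewrite subr_eq0 => /eqP.
Qed.

End PositiveSquare.

Lemma op_sqrt_idem A : linear_op A -> (forall x, A (A x) = A x) -> positive_op ip A ->
  forall x, op_sqrt ip A x = A x.
Proof.
move=> hA hAA hpA x.
have := epsilon_spec (inhabits (fun x : H => x))
  (fun B => positive_op ip B /\ forall x, B (B x) = A x) (ex_intro _ A (conj hpA hAA)).
rewrite -/(op_sqrt ip A); set B := op_sqrt ip A; move=> [hpB hBB].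
have hB : linear_op B by case: hpB => [[]].
have e1 : B (A x) = A x by apply: positive_sqr_fixed; rewrite // hBB hAA.
have e2 : B (x - A x) = 0.
  by apply: positive_sqr_eq0; rewrite // hBB linear_opB // hAA subrr.
by rewrite -[x in B x](subrK (A x)) linear_opD // e1 e2 add0r.
Qed.

(** * The compression of a unitary *)

Section Unitary.
Variable U : H -> H.
Hypothesis hU : unitary ip U.
Local Notation V := (adj ip U).

Lemma unitary_bounded : bounded_op ip U. Proof. by case: hU. Qed.
Lemma unitary_linear : linear_op U. Proof. by case: unitary_bounded. Qed.
Lemma adj_unitaryK x : V (U x) = x. Proof. by case: hU. Qed.
Lemma unitaryK x : U (V x) = x. Proof. by case: hU. Qed.
Lemma ip_unitary x y : ip (U x) y = ip x (V y).
Proof. exact: (@adjE U unitary_bounded). Qed.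
Lemma ip_adj_unitary x y : ip (V x) y = ip x (U y).
Proof. by rewrite ip_conj -ip_unitary -ip_conj. Qed.

Lemma adj_unitary_linear : linear_op V.
Proof.
move=> a x y; apply: ip_inj_r => w.
by rewrite -ip_unitary ipDr ipZr !ip_unitary -ipZr -ipDr.
Qed.

Lemma sqnorm_adj_unitary x : sqnorm (V x) = sqnorm x.
Proof. by rewrite /sqnorm ip_adj_unitary unitaryK. Qed.

Lemma adj_unitary_contraction x : sqnorm (V x) <= sqnorm x.
Proof. by rewrite sqnorm_adj_unitary. Qed.

Lemma unitary_resolvent_injective z : abs2 z < 1 -> injective (fun x => U x - z *: x).
Proof.
move=> hz a b hab.
apply: (resolvent_injective adj_unitary_linear adj_unitary_contraction hz).
have := congr1 V hab.
by rewrite !(linear_opB adj_unitary_linear) !(linear_opZ adj_unitary_linear) !adj_unitaryK.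
Qed.

Lemma unitary_resolvent_surj z k : abs2 z < 1 -> exists x, U x - z *: x = k.
Proof.
move=> hz.
have [w hw] := resolvent_surj adj_unitary_linear adj_unitary_contraction hz (V k).
exists w; rewrite -(unitaryK k) -hw.
by rewrite (linear_opB unitary_linear) (linear_opZ unitary_linear) unitaryK.
Qed.

Variable K : H -> Prop.
Hypothesis hK : closed_subspace ip K.
Local Notation P := (orth_proj ip K).

Let S x := U x - P (U x).

Lemma adj_S y : adj ip S y = V (y - P y).
Proof.
apply: (@adj_unique S (fun y => V (y - P y))) => x {}y.
by rewrite /S -ip_unitary ipBl ipBr (orth_proj_sym hK).
Qed.

Lemma adj_S_linear : linear_op (fun y => V (y - P y)).
Proof.
move=> a x y; rewrite -(adj_unitary_linear a) (orth_proj_linear hK a x y).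
by congr V; rewrite scalerBr opprD addrACA.
Qed.

Lemma adj_S_contraction y : sqnorm (V (y - P y)) <= sqnorm y.
Proof. by rewrite sqnorm_adj_unitary (sqnorm_orth_proj hK y) lerDr sqnorm_ge0. Qed.

Lemma defect_S : defect ip S = fun x => V (P (U x)).
Proof.
rewrite /defect.
have -> : (fun x => x - adj ip S (S x)) = (fun x => V (P (U x))).
  apply: functional_extensionality => x.
  rewrite adj_S /S (orth_proj_residual hK) subr0 (linear_opB adj_unitary_linear).
  by rewrite adj_unitaryK opprB addrC subrK.
have lin : linear_op (fun x => V (P (U x))).
  by move=> a u v; rewrite unitary_linear (orth_proj_linear hK) // adj_unitary_linear.
apply: functional_extensionality; apply: op_sqrt_idem => //.
  by move=> u; rewrite unitaryK (orth_proj_idem hK).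
split; last by move=> u; rewrite ip_adj_unitary (orth_proj_ge0 hK).
split=> //; have [_ [M hM]] := unitary_bounded.
exists M => u; apply: le_trans (hM u).
by rewrite hnormE sqnorm_adj_unitary -hnormE (hnorm_orth_proj_le hK).
Qed.

Lemma defect_adj_S : defect_adj ip S = P.
Proof.
rewrite /defect_adj.
have -> : (fun x => x - S (adj ip S x)) = P.
  apply: functional_extensionality => x.
  by rewrite adj_S /S unitaryK (orth_proj_residual hK) subr0 opprB addrC subrK.
apply: functional_extensionality; apply: op_sqrt_idem.
- exact: orth_proj_linear.
- exact: orth_proj_idem.
split; last exact: orth_proj_ge0.
split; first exact: orth_proj_linear.
by exists 1 => u; rewrite mul1r (hnorm_orth_proj_le hK).
Qed.

Lemma char_fun_S_adj z m : K m ->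
  char_fun ip S z (V m) = z *: P (op_inv (fun w => w - z *: V (w - P w)) (V m)).
Proof.
move=> km; rewrite /char_fun defect_S defect_adj_S /S !unitaryK (orth_proj_id hK) //.
rewrite subrr oppr0 add0r.
by congr (_ *: P (op_inv _ _)); apply: functional_extensionality => w; rewrite adj_S.
Qed.

Section Solution.
Variables (z : R[i]) (k : H).
Hypotheses (hz : abs2 z < 1) (hk : K k).

Let x0 := op_inv (fun x => U x - z *: x) k.
Let W y := op_inv (fun w => w - z *: V (w - P w)) y.
Let UK x := exists m, K m /\ x = V m.

Lemma resolvent_solution : U x0 - z *: x0 = k.
Proof. by apply: (op_inv_spec (f := fun x => U x - z *: x)); apply: unitary_resolvent_surj. Qed.

Lemma resolvent_solution_sum : U x0 + z *: x0 = k + z *: x0 + z *: x0.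
Proof. by rewrite -resolvent_solution subrK. Qed.

Let W_spec y : W y - z *: V (W y - P (W y)) = y.
Proof.
apply: (op_inv_spec (f := fun w => w - z *: V (w - P w))).
exact: (resolvent_surj adj_S_linear adj_S_contraction hz).
Qed.

Let W_eq y w : w - z *: V (w - P w) = y -> W y = w.
Proof.
move=> hw; apply: (resolvent_injective adj_S_linear adj_S_contraction hz).
by rewrite W_spec.
Qed.

(* [y := x0 - z S^* x0] is a solution: [U y = k + z P x0] and [W y = x0]. *)
Lemma char_S_solvable : exists y, UK y /\ U y - char_fun ip S z y = k.
Proof.
set y := x0 - z *: V (x0 - P x0).
have Uy : U y = k + z *: P x0.
  rewrite /y (linear_opB unitary_linear) (linear_opZ unitary_linear) unitaryK.
  by rewrite scalerBr opprB addrCA resolvent_solution addrC.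
have Ky : K (U y).
  by rewrite Uy; apply: (subspaceD hK hk); apply: (subspaceZ hK); exact: (orth_proj_in hK).
exists y; split; first by exists (U y); rewrite adj_unitaryK.
rewrite -[y in char_fun _ _ _ y]adj_unitaryK char_fun_S_adj // adj_unitaryK -/(W y).
by rewrite (W_eq (w := x0)) // Uy addrK.
Qed.

(* Applying [U] to the equation defining [w := W y] turns it into
   [U w - z w = k], so [w = x0] by injectivity. *)
Lemma char_S_solution_sum y : UK y -> U y - char_fun ip S z y = k ->
  U y + char_fun ip S z y = k + z *: P x0 + z *: P x0.
Proof.
move=> [m [km ->]]; rewrite char_fun_S_adj // unitaryK -/(W (V m)) => hm.
have Wx0 : W (V m) = x0.
  apply: (unitary_resolvent_injective hz); rewrite resolvent_solution -hm.
  have := congr1 U (W_spec (V m)); set w := W (V m).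
  rewrite (linear_opB unitary_linear) (linear_opZ unitary_linear) !unitaryK scalerBr => <-.
  by rewrite opprB addrA addrAC addrK.
by rewrite Wx0 in hm *; rewrite -hm subrK.
Qed.

Lemma char_S_ip_sum y : UK y -> U y - char_fun ip S z y = k ->
  ip (U x0 + z *: x0) k = ip (U y + char_fun ip S z y) k.
Proof.
move=> UKy hy; rewrite resolvent_solution_sum char_S_solution_sum //.
by rewrite !ipDl !ipZl (orth_proj_sym hK) (orth_proj_id hK hk).
Qed.

End Solution.

End Unitary.

End Hilbert.

Unset Implicit Arguments.

Theorem theorem3p1 (R : realType) (H : lmodType R[i]) (ip : H -> H -> R[i])
  (hH : is_hilbert ip) (U : H -> H) (hU : unitary ip U)
  (K : H -> Prop) (hK : closed_subspace ip K)
  (z : R[i]) (hz : `|z| < 1) (k : H) (hk : K k) :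
  let P := orth_proj ip K in
  let S := fun x => U x - P (U x) in
  let UK := fun x => exists y, K y /\ x = adj ip U y in
  ip (U (op_inv (fun x => U x - z *: x) k) + z *: op_inv (fun x => U x - z *: x) k) k
  = ip (let y := op_inv_on UK (fun x => U x - char_fun ip S z x) k in
        U y + char_fun ip S z y) k.
Proof.
move=> P S UK.
have hz1 := abs2_lt1 hz.
have [UKy hy] := op_inv_on_spec (char_S_solvable hH hU hK hz1 hk).
exact: (char_S_ip_sum hH hU hK hz1 hk UKy hy).
Qed.
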